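(* The following disintegration formula holds: $\mathbf{n}_+=\int_{\mathbb{R}}\frac{\mathrm{d}z}{2\pi z^2}\,\gamma_z$, where for $z\neq0$, $\gamma_z=\int_{0}^\infty\mathrm{d}v\,\frac{e^{-1/(2v)}}{2v^2}\,\mathbb{P}^{vz^2}_{0\to z}\otimes\Pi_{vz^2}$.
   Context: $U^+$ is the set of pairs $u=(x,y)$ of real continuous functions on $[0,R(u)]$ with $x(0)=y(0)=0$, $y(R(u))=0$, $y\ge0$. $n_+$ is Itô's measure of positive excursions of one-dimensional Brownian motion, normalized so that under $n_+$ the lifetime has ''law'' $\frac{\mathrm{d}r}{2\sqrt{2\pi r^3}}$ on $(0,\infty)$ and, conditionally on the lifetime being $r$, the excursion is a three-dimensional Bessel bridge of length $r$ from $0$ to $0$. $\mathbf{n}_+$ is the measure on $U^+$ given by $\mathbf{n}_+(\mathrm{d}x,\mathrm{d}y)=n_+(\mathrm{d}y)\,\mathbb{P}(X^{R(y)}\in\mathrm{d}x)$, where $X$ is a standard linear Brownian motion and $X^r=(X_t)_{0\le t\le r}$. $\mathbb{P}^{r}_{0\to z}$ denotes the law of a linear Brownian bridge of length $r$ from $0$ to $z$ (describing $x$) and $\Pi_r$ the law of a three-dimensional Bessel bridge of length $r$ from $0$ to $0$ (describing $y$). *)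

From HB Require Import structures.
From mathcomp Require Import all_boot all_order all_algebra.
From mathcomp Require Import all_classical all_reals all_analysis.
From mathcomp Require Import measurable_realfun.
Set Implicit Arguments. Unset Strict Implicit. Unset Printing Implicit Defensive.
Import Order.TTheory GRing.Theory Num.Theory.
Local Open Scope classical_set_scope.
Local Open Scope ring_scope.

Definition lifetime_density (R : realType) (r : R) : R :=
  (2 * Num.sqrt (2 * pi * r ^+ 3))^-1.

(* centered Gaussian density of variance r (law of X_r) *)
Definition gauss_density (R : realType) (r z : R) : R :=
  (Num.sqrt (2 * pi * r))^-1 * expR (- (z ^+ 2) / (2 * r)).

Definition z_density (R : realType) (z : R) : R := (2 * pi * z ^+ 2)^-1.

Definition v_density (R : realType) (v : R) : R :=
  expR (- (2 * v)^-1) / (2 * v ^+ 2).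

(* Ito measure n_+ (of pairs (x,y)) built from the Bessel-bridge kernel Pi
   and the law W r of X^r : n(A) = int dr/(2 sqrt(2pi r^3)) (W r (x) Pi r)(A) *)
Definition bold_n_plus (R : realType) d1 d2
    (X : measurableType d1) (Y : measurableType d2)
    (W : R -> set X -> \bar R) (Pi : R -> set Y -> \bar R) (A : set (X * Y))
    : \bar R :=
  (\int[@lebesgue_measure R]_(r in [set r : R | (0 < r)%R])
     ((lifetime_density r)%:E * (W r \x Pi r) A))%E.

Definition gamma_z (R : realType) d1 d2
    (X : measurableType d1) (Y : measurableType d2)
    (B : R -> R -> set X -> \bar R) (Pi : R -> set Y -> \bar R) (z : R)
    (A : set (X * Y)) : \bar R :=
  (\int[@lebesgue_measure R]_(v in [set v : R | (0 < v)%R])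
     ((v_density v)%:E * (B (v * z ^+ 2)%R z \x Pi (v * z ^+ 2)%R) A))%E.

From HB Require Import structures.
From mathcomp Require Import all_boot all_order all_algebra.
From mathcomp Require Import all_classical all_reals all_analysis.
From mathcomp Require Import measurable_realfun.
From mathcomp Require Import ring.
Import Order.TTheory GRing.Theory Num.Theory.
Import numFieldNormedType.Exports.
Local Open Scope classical_set_scope.
Local Open Scope ring_scope.

(* Under n_+ the lifetime r and the endpoint z = x(r) have the joint density
   (2 sqrt(2 pi r^3))^-1 * exp(-z^2/(2r)) / sqrt(2 pi r) = exp(-z^2/(2r)) / (4 pi r^2),
   and given (r, z) the pair (x, y) is distributed as P^r_{0->z} (x) Pi_r, because
   the law of X^r is the Gaussian mixture of the bridges.  Integrating in r first
   (Tonelli) and substituting r = v z^2 for z <> 0 turns the density into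
   dz / (2 pi z^2) * exp(-1/(2v)) / (2 v^2) dv; the line z = 0 is Lebesgue-null. *)

Section real_measurable.
Variable R : realType.

Lemma invr_measurable : measurable_fun [set: R] GRing.inv.
Proof.
rewrite -(setUv [set (0 : R)]); apply/measurable_funU => //.
  exact: measurableC.
split; first exact: measurable_fun_set1.
apply: subspace_continuous_measurable_fun; first exact: measurableC.
apply: continuous_in_subspaceT => x /[!inE] x0.
by apply: inv_continuous; apply/eqP.
Qed.

Lemma sqrtr_measurable : measurable_fun [set: R] Num.sqrt.
Proof. by apply: continuous_measurable_fun; exact: sqrt_continuous. Qed.

Lemma lifetime_density_measurable : measurable_fun [set: R] (@lifetime_density R).
Proof.
apply: (measurableT_comp invr_measurable); apply: measurable_funM => //.
exact: (measurableT_comp sqrtr_measurable) (measurable_funM _ _).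
Qed.

Lemma gauss_density_measurable :
  measurable_fun [set: R * R] (fun p => gauss_density p.1 p.2).
Proof.
apply: measurable_funM.
  apply: (measurableT_comp invr_measurable).
  exact: (measurableT_comp sqrtr_measurable) (measurable_funM _ _).
apply: (measurableT_comp (@measurable_expR R)); apply: measurable_funM.
  exact/measurable_funN/measurable_funX.
by apply: (measurableT_comp invr_measurable); apply: measurable_funM.
Qed.

Lemma v_density_measurable : measurable_fun [set: R] (@v_density R).
Proof.
apply: measurable_funM.
  apply: (measurableT_comp (@measurable_expR R)); apply: measurable_funN.
  by apply: (measurableT_comp invr_measurable); apply: measurable_funM.
by apply: (measurableT_comp invr_measurable); apply: measurable_funM.
Qed.

End real_measurable.

Definition lifetime_endpoint_density {R : realType} (p : R * R) : R :=
  lifetime_density p.1 * gauss_density p.1 p.2.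

Section densities.
Context {R : realType}.
Implicit Types r v z : R.

Lemma lifetime_density_ge0 r : 0 <= lifetime_density r.
Proof. by rewrite invr_ge0 mulr_ge0 ?sqrtr_ge0. Qed.

Lemma gauss_density_ge0 r z : 0 <= gauss_density r z.
Proof. by rewrite mulr_ge0 ?expR_ge0 // invr_ge0 sqrtr_ge0. Qed.

Lemma z_density_ge0 z : 0 <= z_density z.
Proof. by rewrite invr_ge0 mulr_ge0 ?sqr_ge0 // mulr_ge0 ?pi_ge0. Qed.

Lemma v_density_ge0 v : 0 <= v_density v.
Proof. by rewrite divr_ge0 ?expR_ge0 // mulr_ge0 ?sqr_ge0. Qed.

Lemma lifetime_endpoint_density_ge0 (p : R * R) : 0 <= lifetime_endpoint_density p.
Proof. by rewrite mulr_ge0 ?lifetime_density_ge0 ?gauss_density_ge0. Qed.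

Lemma lifetime_endpoint_density_measurable :
  measurable_fun [set: R * R] lifetime_endpoint_density.
Proof.
apply: measurable_funM; last exact: gauss_density_measurable.
exact: (measurableT_comp (@lifetime_density_measurable R)).
Qed.

(* [Num.sqrt] and [^-1] return 0 on nonpositive arguments. *)
Lemma lifetime_density_le0 r : r <= 0 -> lifetime_density r = 0.
Proof.
move=> r_le0; have : 2 * pi * r ^+ 3 <= 0.
  by rewrite pmulr_rle0 ?mulr_gt0 ?pi_gt0 // exprSr mulr_ge0_le0 ?sqr_ge0.
by rewrite /lifetime_density => /ler0_sqrtr ->; rewrite mulr0 invr0.
Qed.

Lemma lifetime_endpoint_density_le0 r z :
  r <= 0 -> lifetime_endpoint_density (r, z) = 0.
Proof.
by move=> r_le0; rewrite /lifetime_endpoint_density lifetime_density_le0 ?mul0r.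
Qed.

Lemma lifetime_endpoint_densityE r z : 0 < r ->
  lifetime_endpoint_density (r, z) = expR (- z ^+ 2 / (2 * r)) / (4 * pi * r ^+ 2).
Proof.
move=> r_gt0; have two_pi_gt0 : 0 < 2 * pi :> R by rewrite mulr_gt0 ?pi_gt0.
have sqrt_prod : Num.sqrt (2 * pi * r ^+ 3) * Num.sqrt (2 * pi * r) = 2 * pi * r ^+ 2.
  rewrite -sqrtrM; last by rewrite ltW // mulr_gt0 ?exprn_gt0.
  have -> : 2 * pi * r ^+ 3 * (2 * pi * r) = (2 * pi * r ^+ 2) ^+ 2 by ring.
  by rewrite sqrtr_sqr ger0_norm // ltW // mulr_gt0 ?exprn_gt0.
rewrite /lifetime_endpoint_density /lifetime_density /gauss_density /=.
rewrite mulrA -invfM -(mulrA 2 (Num.sqrt _)) sqrt_prod mulrC.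
have := @pi_gt0 R; move: (@pi R) => p p_gt0; field.
by rewrite !gt_eqF.
Qed.

Lemma lifetime_endpoint_density_scale v z : 0 < v -> z != 0 ->
  z ^+ 2 * lifetime_endpoint_density (v * z ^+ 2, z) = z_density z * v_density v.
Proof.
move=> v_gt0 z_neq0.
have z2_gt0 : 0 < z ^+ 2 by rewrite lt_def sqrf_eq0 z_neq0 sqr_ge0.
rewrite lifetime_endpoint_densityE ?(mulr_gt0 v_gt0) // /z_density /v_density.
have -> : - z ^+ 2 / (2 * (v * z ^+ 2)) = - (2 * v)^-1 by field; rewrite z_neq0 gt_eqF.
have := @pi_gt0 R; move: (@pi R) => p p_gt0; field.
by rewrite z_neq0 !gt_eqF.
Qed.

End densities.

Section lebesgue_scale.
Local Open Scope ereal_scope.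
Context {R : realType}.
Local Notation mu := (@lebesgue_measure R).
Context {c : R} (c_gt0 : (0 < c)%R).

Let scale := ( *%R c) : R -> measurableTypeR R.
Let scale_measurable : measurable_fun [set: R] scale.
Proof. exact: mulrl_measurable. Qed.

(* The pushforward is a measure only given [scale_measurable], which canonical
   structure inference cannot supply, hence the explicit instance. *)
Let scaled_mu := mscale (NngNum (ltW c_gt0))
  (measure_function_pushforward__canonical__measure_function_Measure mu scale_measurable).

Lemma lebesgue_measure_scale (A : set R) : measurable A ->
  mu A = c%:E * mu (scale @^-1` A).
Proof.
move=> mA; rewrite -[RHS]/(scaled_mu A); move: A mA.
apply: lebesgue_measure_unique => _ [[a b] _ <-] /=.
rewrite -[RHS]/(c%:E * mu (scale @^-1` `]a, b]%classic)).
have -> : scale @^-1` `]a, b]%classic = `](a / c)%R, (b / c)%R]%classic.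
  by apply/seteqP; split => x /=;
    rewrite !in_itv /= ler_pdivlMr // ltr_pdivrMr // mulrC.
rewrite !lebesgue_measure_itv /= !lte_fin ltr_pM2r ?invr_gt0 //.
case: ifPn => _; last by rewrite mule0.
by rewrite -EFinM -!EFinB mulrBr ![(c * (_ / c))%R]mulrC !divfK ?gt_eqF.
Qed.

Lemma ge0_integral_pos_scale (f : R -> \bar R) :
  measurable_fun [set r : R | (0 < r)%R] f -> (forall r, (0 < r)%R -> 0 <= f r) ->
  \int[mu]_(r in [set r : R | (0 < r)%R]) f r =
  c%:E * \int[mu]_(v in [set v : R | (0 < v)%R]) f (c * v)%R.
Proof.
move=> mf f0; rewrite (eq_measure_integral scaled_mu); last first.
  by move=> A mA _; exact: lebesgue_measure_scale.
have mpos : measurable [set r : R | (0 < r)%R].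
  by rewrite -set_itvoy; exact: measurable_itv.
rewrite ge0_integral_mscale //; congr (_ * _).
rewrite ge0_integral_pushforward //; last by move=> r /[!inE]; exact: f0.
suff -> : scale @^-1` [set r : R | (0 < r)%R] = [set v : R | (0 < v)%R] by [].
by apply/seteqP; split => x /=; rewrite pmulr_rgt0.
Qed.

End lebesgue_scale.

Section lebesgue_integral_supports.
Local Open Scope ereal_scope.
Context {R : realType}.
Local Notation mu := (@lebesgue_measure R).

Lemma integral_gt0_setT (f : R -> \bar R) : (forall r, (r <= 0)%R -> f r = 0) ->
  \int[mu]_(r in [set r : R | (0 < r)%R]) f r = \int[mu]_r f r.
Proof.
move=> f_le0; rewrite integral_mkcond; apply: eq_integral => r _.
rewrite /patch; case: ifPn => // /negP r_le0; apply/esym/f_le0.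
by rewrite leNgt; apply/negP => r_gt0; apply: r_le0; rewrite inE.
Qed.

Lemma integral_neq0_setT (f : R -> \bar R) : measurable_fun [set: R] f ->
  \int[mu]_(z in [set z : R | z != 0%R]) f z = \int[mu]_z f z.
Proof.
move=> mf; have -> : [set z : R | z != 0%R] = [set: R] `\ 0%R.
  by apply/seteqP; split => z /=; [move=> /eqP|move=> [_ /eqP]].
by apply: integral_setD1; [exact: measurableD|exact: measurable_funS mf].
Qed.

End lebesgue_integral_supports.

Section mixture_integral.
Local Open Scope ereal_scope.
Import HBNNSimple.
Context {d d' : measure_display} {T : measurableType d} {X : measurableType d'}.
Context {R : realType} {mu : {measure set T -> \bar R}} {h : T -> R}.
Context {k : T -> {measure set X -> \bar R}} {W : {measure set X -> \bar R}}.
Hypotheses (h_ge0 : forall t, (0 <= h t)%R) (h_measurable : measurable_fun [set: T] h).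
Hypothesis k_measurable : forall U, measurable U -> measurable_fun [set: T] (k ^~ U).
Hypothesis W_mixture : forall U, measurable U -> W U = \int[mu]_t ((h t)%:E * k t U).

Let hE_measurable : measurable_fun [set: T] (fun t => (h t)%:E).
Proof. exact/measurable_EFinP. Qed.

Lemma integral_mixture_nnsfun (g : {nnsfun X >-> R}) :
  \int[W]_x (g x)%:E = \int[mu]_t ((h t)%:E * \int[k t]_x (g x)%:E).
Proof.
rewrite integralT_nnsfun sintegralE.
under [RHS]eq_integral => t _.
  rewrite integralT_nnsfun sintegralE ge0_mule_fsumr; last first.
    by move=> r; exact: nnsfun_mulemu_ge0.
  over.
rewrite /= ge0_integral_fsum //; last 2 first.
- move=> r; apply: emeasurable_funM => //; apply: measurable_funeM.
  exact/k_measurable/measurable_funPTI.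
- by move=> r t _; rewrite mule_ge0 ?lee_fin // nnsfun_mulemu_ge0.
apply: eq_fsbigr => r _; have [r_lt0|r_ge0] := ltP r 0%R.
  rewrite preimage_nnfun0 // measure0 mule0 integral0_eq // => t _.
  by rewrite measure0 !mule0.
under eq_integral do rewrite muleCA.
rewrite ge0_integralZl // ?W_mixture //; last 2 first.
- by apply: emeasurable_funM => //; exact/k_measurable/measurable_funPTI.
- by move=> t _; rewrite mule_ge0 ?lee_fin.
Qed.

Lemma ge0_integral_mixture (f : X -> \bar R) :
  (forall x, 0 <= f x) -> measurable_fun [set: X] f ->
  \int[W]_x f x = \int[mu]_t ((h t)%:E * \int[k t]_x f x).
Proof.
move=> f_ge0 mf; pose g := nnsfun_approx measurableT mf.
have g_ge0 n x : 0 <= (g n x)%:E by rewrite lee_fin.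
have g_measurable n : measurable_fun [set: X] (fun x => (g n x)%:E).
  exact/measurable_EFinP.
have g_nd x : {homo (fun n => (g n x)%:E) : a b / (a <= b)%N >-> a <= b}.
  by move=> a b ab; rewrite lee_fin; exact/lefP/nd_nnsfun_approx.
have int_g_cvg t : (\int[k t]_x (g n x)%:E) @[n --> \oo] --> \int[k t]_x f x.
  have := @cvg_monotone_convergence _ _ _ (k t) _ measurableT
    (fun n x => (g n x)%:E) g_measurable (fun n x _ => g_ge0 n x) (fun x _ => g_nd x).
  by congr (_ --> _); apply: eq_integral => x _; exact/cvg_lim/cvg_nnsfun_approx.
transitivity (limn (fun n => \int[W]_x (g n x)%:E)).
  rewrite -monotone_convergence //.
  by apply: eq_integral => x _; apply/esym/cvg_lim/cvg_nnsfun_approx.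
under eq_fun do rewrite integral_mixture_nnsfun.
rewrite -monotone_convergence //.
- apply: eq_integral => t _; apply/cvg_lim => //.
  by apply: cvgeZl => //; exact: int_g_cvg.
- move=> n; apply: emeasurable_funM => //.
  exact: measurable_fun_integral_kernel.
- by move=> n t _; rewrite mule_ge0 ?lee_fin ?integral_ge0.
- move=> t _ a b ab; rewrite lee_wpmul2l ?lee_fin //.
  by apply: ge0_le_integral => // x _; exact: g_nd.
Qed.

Lemma product_measure_mixture {d''} {Y : measurableType d''}
    (P : {sigma_finite_measure set Y -> \bar R}) (A : set (X * Y)) :
  measurable A -> (W \x P) A = \int[mu]_t ((h t)%:E * (k t \x P) A).
Proof.
move=> mA; apply: ge0_integral_mixture => //.
exact: measurable_fun_xsection.
Qed.

End mixture_integral.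

Section lifetime_endpoint_substitution.
Local Open Scope ereal_scope.
Context {R : realType}.
Local Notation mu := (@lebesgue_measure R).
Context {K : R * R -> \bar R}.
Hypotheses (K_measurable : measurable_fun [set: R * R] K) (K_ge0 : forall p, 0 <= K p).

Let H p := (lifetime_endpoint_density p)%:E * K p.

Let H_measurable : measurable_fun [set: R * R] H.
Proof.
apply: emeasurable_funM => //.
by apply/measurable_EFinP; exact: lifetime_endpoint_density_measurable.
Qed.

Let H_ge0 p : 0 <= H p.
Proof. by rewrite mule_ge0 ?lee_fin ?lifetime_endpoint_density_ge0. Qed.

Lemma integral_lifetime_endpoint_density z : z != 0%R ->
  \int[mu]_r ((lifetime_endpoint_density (r, z))%:E * K (r, z)) =
  (z_density z)%:E *
  \int[mu]_(v in [set v : R | (0 < v)%R]) ((v_density v)%:E * K (v * z ^+ 2, z)%R).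
Proof.
move=> z_neq0.
have z2_gt0 : (0 < z ^+ 2)%R by rewrite lt_def sqrf_eq0 z_neq0 sqr_ge0.
have mpos : measurable [set v : R | (0 < v)%R].
  by rewrite -set_itvoy; exact: measurable_itv.
rewrite -(integral_gt0_setT (fun r => H (r, z))); last first.
  by move=> r r_le0; rewrite /H lifetime_endpoint_density_le0 ?mul0e.
have H_scaled_measurable : measurable_fun [set: R] (fun v => H (z ^+ 2 * v, z)%R).
  apply: (measurableT_comp (measurable_fun_pair1 _ H_measurable)).
  exact: mulrl_measurable.
have K_scaled_measurable :
    measurable_fun [set: R] (fun v => (v_density v)%:E * K (v * z ^+ 2, z)%R).
  apply: emeasurable_funM.
    by apply/measurable_EFinP; exact: v_density_measurable.
  apply: (measurableT_comp (measurable_fun_pair1 _ K_measurable)).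
  exact: mulrr_measurable.
rewrite (ge0_integral_pos_scale z2_gt0); last 2 first.
- exact: measurable_funS (measurable_fun_pair1 _ H_measurable).
- by move=> r _; exact: H_ge0.
rewrite -ge0_integralZl //; last 2 first.
- exact: measurable_funS H_scaled_measurable.
- by rewrite lee_fin sqr_ge0.
rewrite -ge0_integralZl //; last 3 first.
- exact: measurable_funS K_scaled_measurable.
- by move=> v _; rewrite mule_ge0 ?lee_fin ?v_density_ge0.
- by rewrite lee_fin z_density_ge0.
apply: eq_integral => v /[!inE] v_gt0.
rewrite /H muleA -EFinM [(z ^+ 2 * v)%R]mulrC lifetime_endpoint_density_scale //.
by rewrite EFinM muleA.
Qed.

End lifetime_endpoint_substitution.

Section bridge_mixture.
Local Open Scope ereal_scope.
Context {R : realType} {d1 d2 : measure_display}.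
Context {X : measurableType d1} {Y : measurableType d2}.
Context {W : R -> probability X R} {B : R -> R -> probability X R}.
Context {Pi : R -> probability Y R}.
Hypothesis B_disint : forall r (S : set X), (0 < r)%R -> measurable S ->
  W r S = \int[@lebesgue_measure R]_(z in setT) ((gauss_density r z)%:E * B r z S).
Hypothesis kernel_meas : forall A : set (X * Y), measurable A ->
  measurable_fun setT (fun p : R * R => (B p.1 p.2 \x Pi p.1) A).

Lemma bridge_measurable r (U : set X) : measurable U ->
  measurable_fun [set: R] (fun z => B r z U).
Proof.
move=> mU; have mUY := measurableX mU (@measurableT _ Y).
have := measurable_fun_pair2 r (kernel_meas _ mUY).
congr measurable_fun; apply/funext => z /=.
rewrite product_measure1E // [X in _ * X](_ : _ = 1) ?mule1 //; exact: probability_setT.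
Qed.

Lemma bold_n_plus_iterated (A : set (X * Y)) : measurable A ->
  bold_n_plus W Pi A = \int[@lebesgue_measure R]_r \int[@lebesgue_measure R]_z
    ((lifetime_endpoint_density (r, z))%:E * (B r z \x Pi r) A).
Proof.
move=> mA; rewrite /bold_n_plus -integral_gt0_setT; last first.
  move=> r r_le0; apply: integral0_eq => z _.
  by rewrite lifetime_endpoint_density_le0 ?mul0e.
apply: eq_integral => r /[!inE] r_gt0.
have gauss_r_measurable := measurable_fun_pair2 r (gauss_density_measurable R).
rewrite (product_measure_mixture (mu := @lebesgue_measure R) (gauss_density_ge0 r)
  gauss_r_measurable (bridge_measurable r) (fun U => B_disint r U r_gt0) (Pi r) A mA).
rewrite -ge0_integralZl ?lee_fin ?lifetime_density_ge0 //.
- by apply: eq_integral => z _; rewrite muleA -EFinM.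
- apply: emeasurable_funM; first exact/measurable_EFinP.
  exact: measurable_fun_pair2 r (kernel_meas A mA).
- by move=> z _; rewrite mule_ge0 ?lee_fin ?gauss_density_ge0.
Qed.

End bridge_mixture.

Theorem proposition2p9 (R : realType) (d1 d2 : measure_display)
    (X : measurableType d1) (Y : measurableType d2)
    (endpt : R -> X -> R)
    (W : R -> probability X R) (B : R -> R -> probability X R)
    (Pi : R -> probability Y R)
    (endpt_meas : forall r, measurable_fun setT (endpt r))
    (B_end : forall r z, 0 < r -> B r z (endpt r @^-1` [set z]) = 1%E)
    (B_disint : forall r (S : set X), 0 < r -> measurable S ->
        W r S = (\int[@lebesgue_measure R]_(z in setT)
                   ((gauss_density r z)%:E * B r z S))%E)
    (kernel_meas : forall A : set (X * Y), measurable A ->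
        measurable_fun setT (fun p : R * R => ((B p.1 p.2 \x Pi p.1) A)%E : \bar R))
    (A : set (X * Y)) (mA : measurable A) :
  bold_n_plus W Pi A =
  (\int[@lebesgue_measure R]_(z in [set z : R | (z != 0)%R])
     ((z_density z)%:E * gamma_z B Pi z A))%E.
Proof.
pose K p := (B p.1 p.2 \x Pi p.1)%E A.
pose H p := ((lifetime_endpoint_density p)%:E * K p)%E.
have H_measurable : measurable_fun [set: R * R] H.
  apply: emeasurable_funM; last exact: kernel_meas.
  by apply/measurable_EFinP; exact: lifetime_endpoint_density_measurable.
have H_ge0 p : (0 <= H p)%E.
  by rewrite mule_ge0 ?lee_fin ?lifetime_endpoint_density_ge0.
transitivity (\int[@lebesgue_measure R]_z \int[@lebesgue_measure R]_r H (r, z))%E.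
  by rewrite (bold_n_plus_iterated B_disint kernel_meas A mA); exact: fubini_tonelli.
rewrite -integral_neq0_setT; last exact: measurable_fun_fubini_tonelli_G.
apply: eq_integral => z /[!inE] z_neq0.
by rewrite (integral_lifetime_endpoint_density (kernel_meas A mA)).
Qed.
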